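(* Let $r\ge1$ and let $\mathcal R_{2r\times 2r}$ be the grid graph with vertex set $\{0,1,\dots,2r-1\}^2\subset\mathbf{Z}^2$ and edges between vertices at Euclidean distance $1$. Let $s_i$ denote the edge between $(i,i)$ and $(i+1,i)$, for $i=0,1,\dots,r-1$ (the ''step-diagonal'' edges). If $G$ is obtained from $\mathcal R_{2r\times 2r}$ by deleting any $k$ of the edges $s_0,\dots,s_{r-1}$ (keeping all vertices), then $2^{r-k}$ divides $m_G$.
   Context: $m_G$ denotes the number of perfect matchings of the graph $G$. *)

From mathcomp Require Import all_boot.
Set Implicit Arguments. Unset Strict Implicit. Unset Printing Implicit Defensive.

(* A (finite simple) graph on a finType V is given by its edge set,
   a set of 2-element subsets of V. *)

Definition perfect_matching (V : finType) (E M : {set {set V}}) : bool :=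
  (M \subset E) && [forall v : V, #|[set e in M | v \in e]| == 1].

Definition num_pm (V : finType) (E : {set {set V}}) : nat :=
  #|[set M : {set {set V}} | perfect_matching E M]|.

Definition gridV (r : nat) : finType := ('I_(r.*2) * 'I_(r.*2))%type.

Definition grid_adj (r : nat) (u v : gridV r) : bool :=
  ((u.1 == v.1) && ((u.2.+1 == v.2 :> nat) || (v.2.+1 == u.2 :> nat)))
  || ((u.2 == v.2) && ((u.1.+1 == v.1 :> nat) || (v.1.+1 == u.1 :> nat))).

Definition is_step (r : nat) (S : {set 'I_r}) (u v : gridV r) : bool :=
  [exists i in S, [&& (u.1 == i :> nat), (u.2 == i :> nat),
                      (v.1 == i.+1 :> nat) & (v.2 == i :> nat)]].

Definition grid_minus_steps (r : nat) (S : {set 'I_r}) : {set {set gridV r}} :=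
  [set e : {set gridV r} | [exists u : gridV r, exists v : gridV r,
     [&& e == [set u; v], grid_adj u v, ~~ is_step S u v & ~~ is_step S v u]]].

From mathcomp Require Import all_boot zify.
Set Implicit Arguments. Unset Strict Implicit. Unset Printing Implicit Defensive.

(* A perfect matching is an involution m along edges.  Let sigma be the
   reflection (x, y) |-> (y, x), an automorphism of the full grid.  The orbits
   of sigma \o m trace the alternating cycles of M and sigma(M); replacing m by
   sigma m sigma on the orbit of a diagonal vertex d changes the partner of d
   and yields a perfect matching of G unless sigma maps an edge of M on that
   orbit to a deleted s_i.  Flips on distinct orbits are independent, so 2^f
   divides m_G as soon as every matching has f flippable orbits through the
   diagonal.  An orbit meets the diagonal in at most two vertices, so at least
   r orbits meet it, and s_i can only spoil the orbit through (i, i); hence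
   f = r - k. *)

Lemma card_involution_halves (T : finType) (A : {set T}) (g : T -> T) (b : T -> bool) :
    (forall x, x \in A -> [/\ g x \in A, g (g x) = x & b (g x) = ~~ b x]) ->
  #|A| = #|[set x in A | ~~ b x]|.*2.
Proof.
move=> gP; rewrite -addnn -{1}(cardsID [set x | ~~ b x] A).
have -> : A :&: [set x | ~~ b x] = [set x in A | ~~ b x].
  by apply/setP => x; rewrite !inE.
congr (_ + _); rewrite -(@card_in_imset _ _ g [set x in A | ~~ b x]).
  apply: eq_card => y; rewrite !inE; apply/idP/imsetP.
    case/andP=> /negbNE by_ yA; have [gyA ggy bgy] := gP y yA.
    by exists (g y); rewrite ?ggy // inE gyA bgy by_.
  case=> x; rewrite inE => /andP[xA bx] ->; have [gxA _ bgx] := gP x xA.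
  by rewrite bgx bx gxA.
move=> x y; rewrite !inE => /andP[xA _] /andP[yA _] gxy.
by have [_ ggx _] := gP x xA; have [_ ggy _] := gP y yA; rewrite -ggx gxy ggy.
Qed.

Lemma pow2_dvd_card_flips (T : finType) (I : eqType) (A : {set T}) (L : T -> seq I)
    (flip : I -> T -> T) (bit : I -> T -> bool) n :
    (forall x i, x \in A -> i \in L x ->
       [/\ flip i x \in A, L (flip i x) = L x, flip i (flip i x) = x
         & bit i (flip i x) = ~~ bit i x]) ->
    (forall x i j, x \in A -> i \in L x -> j \in L x -> j != i ->
       bit j (flip i x) = bit j x) ->
    (forall x, x \in A -> uniq (L x) /\ n <= size (L x)) ->
  2 ^ n %| #|A|.
Proof.
(* Pairing x with its flip along the head of L x halves A; the tail indices
   still act on the half where that bit is false. *)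
elim: n A L => [|n IHn] A L flipP bit_flip sizeL; first by rewrite dvd1n.
case: (set_0Vmem A) => [-> | [x0 x0A]]; first by rewrite cards0 dvdn0.
have [_] := sizeL x0 x0A; case: (L x0) => // i0 _ _.
pose hd x := head i0 (L x).
have hdL x : x \in A -> hd x \in L x.
  by move=> xA; have [_] := sizeL x xA; rewrite /hd; case: (L x) => //= i s; rewrite mem_head.
have hd_flip x i : x \in A -> i \in L x -> hd (flip i x) = hd x.
  by move=> xA iL; have [_ fL _ _] := flipP x i xA iL; rewrite /hd fL.
have tailL x i : x \in A -> i \in behead (L x) -> i \in L x /\ i != hd x.
  move=> xA; have [+ _] := sizeL x xA; rewrite /hd.
  case: (L x) => //= j s /andP[js _] iS; rewrite inE iS orbT.
  by split=> //; apply: contraNneq js => <-.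
rewrite (@card_involution_halves _ _ (fun x => flip (hd x) x) (fun x => bit (hd x) x));
  last first.
  move=> x xA; have [? _ ? ?] := flipP x _ xA (hdL x xA).
  by rewrite hd_flip ?hdL.
rewrite expnS -mul2n dvdn_pmul2l //; apply: (IHn _ (fun x => behead (L x))).
- move=> x i; rewrite inE => /andP[xA bx] /(tailL x i xA)[iL ni].
  have [fA fL ffx fb] := flipP x i xA iL.
  by rewrite fL inE fA hd_flip // bit_flip ?hdL // eq_sym.
- move=> x i j; rewrite inE => /andP[xA _] /(tailL x i xA)[iL _] /(tailL x j xA)[jL _].
  exact: bit_flip.
- move=> x; rewrite inE => /andP[xA _]; have [] := sizeL x xA.
  by case: (L x) => //= i s /andP[].
Qed.

Section PerfectMatchingInvolutions.
Variables (V : finType) (adj : rel V).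

Definition edges_of : {set {set V}} :=
  [set e : {set V} | [exists u, exists v, (e == [set u; v]) && adj u v]].

Definition pm_involution (m : {ffun V -> V}) : bool :=
  [forall v, (m (m v) == v) && adj v (m v)].

Definition pm_of (m : {ffun V -> V}) : {set {set V}} := [set [set v; m v] | v : V].

Lemma pm_involutionK m : pm_involution m -> involutive m.
Proof. by move=> /forallP pm v; case/andP: (pm v) => /eqP. Qed.

Lemma pm_involution_adj m v : pm_involution m -> adj v (m v).
Proof. by move=> /forallP /(_ v) /andP[]. Qed.

Hypotheses (adj_sym : symmetric adj) (adj_irr : irreflexive adj).

Lemma edges_ofP e : reflect (exists u v, e = [set u; v] /\ adj u v) (e \in edges_of).
Proof.
apply: (iffP idP); rewrite inE.
  by case/existsP=> u /existsP[v /andP[/eqP -> uv]]; exists u, v.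
by case=> u [v [-> uv]]; apply/existsP; exists u; apply/existsP; exists v; rewrite eqxx.
Qed.

Lemma adj_neq u v : adj u v -> u != v.
Proof. by apply: contraTneq => ->; rewrite adj_irr. Qed.

Lemma set2_mem_edges_of u v : ([set u; v] \in edges_of) = adj u v.
Proof.
apply/edges_ofP/idP => [[u' [v' [e uv']]] | uv]; last by exists u, v.
have u'v' := adj_neq uv'.
have : u \in [set u'; v'] by rewrite -e !inE eqxx.
have : v \in [set u'; v'] by rewrite -e !inE eqxx orbT.
have : u' \in [set u; v] by rewrite e !inE eqxx.
have : v' \in [set u; v] by rewrite e !inE eqxx orbT.
by do 4![case/set2P=> ?]; subst; rewrite ?eqxx // adj_sym in u'v' *.
Qed.

Lemma pm_of_perfect m : pm_involution m -> perfect_matching edges_of (pm_of m).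
Proof.
move=> pm; have mK := pm_involutionK pm; apply/andP; split.
  by apply/subsetP => _ /imsetP[v _ ->]; rewrite set2_mem_edges_of pm_involution_adj.
apply/forallP => v; suff -> : [set e in pm_of m | v \in e] = [set [set v; m v]].
  by rewrite cards1.
apply/setP => e; rewrite !inE; apply/andP/eqP => [[/imsetP[w _ ->]] | ->].
  by case/set2P=> ->; rewrite ?mK // setUC.
by split; [apply/imsetP; exists v | rewrite !inE eqxx].
Qed.

Lemma pm_of_inj : {in pm_involution &, injective pm_of}.
Proof.
move=> m1 m2 pm1 pm2 e; apply/ffunP => v.
have : [set v; m1 v] \in pm_of m2 by rewrite -e; apply/imsetP; exists v.
case/imsetP=> w _ vw; have := adj_neq (pm_involution_adj v pm1).
have : v \in [set w; m2 w] by rewrite -vw !inE eqxx.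
have : m1 v \in [set w; m2 w] by rewrite -vw !inE eqxx orbT.
by do 2![case/set2P=> ->]; rewrite ?eqxx ?(pm_involutionK pm2).
Qed.

Lemma perfect_pm_of M :
  perfect_matching edges_of M -> exists2 m, pm_involution m & M = pm_of m.
Proof.
case/andP=> /subsetP ME /forallP cover.
have edge_uniq v e1 e2 : e1 \in M -> e2 \in M -> v \in e1 -> v \in e2 -> e1 = e2.
  move=> e1M e2M ve1 ve2; have /eqP/eq_leq/card_le1_eqP := cover v.
  by apply; rewrite inE ?e1M ?e2M.
have partner v : exists w, [set v; w] \in M.
  have /eqP/esym/eq_leq/card_gt0P[e] := cover v; rewrite inE => /andP[eM ve].
  have /edges_ofP[u [w [ee _]]] := ME e eM; move: eM ve; rewrite ee => eM.
  by case/set2P=> ->; [exists w | exists u; rewrite setUC].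
pose m := [ffun v => odflt v [pick w | [set v; w] \in M]].
have mM v : [set v; m v] \in M.
  rewrite ffunE; case: pickP => [w //| none].
  by have [w] := partner v; rewrite none.
have madj v : adj v (m v) by rewrite -set2_mem_edges_of ME.
have mK v : m (m v) = v.
  have e : [set v; m v] = [set m v; m (m v)].
    by apply: (edge_uniq (m v)); rewrite ?mM // !inE eqxx ?orbT.
  have : m (m v) \in [set v; m v] by rewrite e !inE eqxx orbT.
  by case/set2P=> // mmv; have := adj_neq (madj (m v)); rewrite mmv eqxx.
exists m; first by apply/forallP => v; rewrite mK eqxx madj.
apply/setP => e; apply/idP/imsetP => [eM | [v _ ->] //].
have /edges_ofP[u [w [ee _]]] := ME e eM; move: eM; rewrite ee => eM; exists u => //.
by apply: (edge_uniq u); rewrite ?mM // !inE eqxx.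
Qed.

Lemma num_pm_edges_of : num_pm edges_of = #|[set m | pm_involution m]|.
Proof.
rewrite /num_pm -(card_in_imset (f := pm_of)); last first.
  by move=> m1 m2; rewrite !inE; apply: pm_of_inj.
apply: eq_card => M; rewrite !inE; apply/idP/imsetP => [/perfect_pm_of[m pm ->] | [m]].
  by exists m; rewrite ?inE.
by rewrite inE => pm ->; apply: pm_of_perfect.
Qed.

End PerfectMatchingInvolutions.

Lemma eq_fconnect_on (T : finType) (f g : T -> T) (a : T) :
  (forall x, fconnect f a x -> f x = g x) -> fconnect f a =1 fconnect g a.
Proof.
move=> fg; have iterE n : iter n f a = iter n g a.
  by elim: n => //= n IHn; rewrite -IHn fg ?fconnect_iter.
move=> x; apply/idP/idP => /iter_findex <-; first by rewrite iterE fconnect_iter.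
by rewrite -iterE fconnect_iter.
Qed.

Section Twist.
Variables (V : finType) (sigma : V -> V).
Hypothesis sigmaK : involutive sigma.

Definition twist (m : {ffun V -> V}) (x : V) : V := sigma (m x).

(* Reflect the matching along the alternating cycle of M and sigma(M) through d. *)
Definition flip (m : {ffun V -> V}) (d : V) : {ffun V -> V} :=
  [ffun x => if fconnect (twist m) d x then sigma (m (sigma x)) else m x].

Definition partner_precedes (m : {ffun V -> V}) (d : V) : bool :=
  enum_rank (m d) < enum_rank (sigma (m d)).

Definition orbit_rep (m : {ffun V -> V}) (d : V) : bool :=
  (sigma d == d) &&
  [forall x, (fconnect (twist m) d x && (sigma x == x)) ==> (enum_rank d <= enum_rank x)].

Definition rep_of (m : {ffun V -> V}) (x : V) : V :=
  odflt x [pick y | orbit_rep m y && fconnect (twist m) x y].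

Definition flippable (adj : rel V) (m : {ffun V -> V}) (d : V) : bool :=
  [forall y, fconnect (twist m) d y ==> adj (sigma y) (sigma (m y))].

Lemma twist_inj (m : {ffun V -> V}) : involutive m -> injective (twist m).
Proof. by move=> mK x y /(inv_inj sigmaK); apply: inv_inj. Qed.

Lemma same_twist_orbit (m : {ffun V -> V}) :
  involutive m -> left_transitive (fconnect (twist m)).
Proof. by move=> mK; apply/same_connect/fconnect_sym/twist_inj. Qed.

Section Involution.
Variable m : {ffun V -> V}.
Hypothesis mK : involutive m.
Local Notation tw := (twist m).

Lemma finv_twist x : finv tw x = m (sigma x).
Proof.
have {1}<- : tw (m (sigma x)) = x by rewrite /twist mK sigmaK.
exact/finv_f/twist_inj.
Qed.

Lemma sigma_iter_twist n x : sigma (iter n tw x) = iter n (finv tw) (sigma x).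
Proof. by elim: n => //= n <-; rewrite finv_twist /twist !sigmaK. Qed.

Lemma rep_ofP x : sigma x = x -> orbit_rep m (rep_of m x) && fconnect tw x (rep_of m x).
Proof.
move=> xfix; rewrite /rep_of; case: pickP => [y // | no_rep] /=.
pose P y := (sigma y == y) && fconnect tw x y.
have Px : P x by rewrite /P xfix eqxx connect0.
case: (@arg_minnP _ x P (fun y => enum_rank y) Px) => y /andP[yfix xy] ymin.
have /negP[] := no_rep y; rewrite xy andbT /orbit_rep yfix /=.
apply/forallP => z; apply/implyP => /andP[yz zfix]; apply: ymin.
by rewrite /P zfix (connect_trans xy yz).
Qed.

Lemma orbit_rep_unique a b : orbit_rep m a -> orbit_rep m b -> fconnect tw a b -> a = b.
Proof.
move=> /andP[afix /forallP amin] /andP[bfix /forallP bmin] ab.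
have ba : fconnect tw b a by rewrite fconnect_sym //; apply: twist_inj.
apply/enum_rank_inj/val_inj/eqP; rewrite eqn_leq.
by rewrite (implyP (amin b)) ?ab // (implyP (bmin a)) ?ba.
Qed.

Section Orbit.
Variable d : V.
Hypothesis dfix : sigma d = d.
Local Notation O := (fconnect tw d).
Local Notation m' := (flip m d).

Lemma orbit_sigma x : O x -> O (sigma x).
Proof.
move=> /iter_findex <-; rewrite sigma_iter_twist dfix.
by rewrite -(same_fconnect_finv (twist_inj mK)) fconnect_iter.
Qed.

Lemma orbit_m x : O x -> O (m x).
Proof. by move=> Ox; rewrite -[m x]sigmaK; apply/orbit_sigma/(connect_trans Ox)/fconnect1. Qed.

Lemma orbit_out y z : ~~ O y -> fconnect tw y z -> ~~ O z.
Proof.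
move=> Oy yz; apply: contra Oy => Oz; apply: connect_trans Oz _.
by rewrite fconnect_sym //; apply: twist_inj.
Qed.

Lemma card_fixed_in_orbit : #|[set x | O x && (sigma x == x)]| <= 2.
Proof.
pose L := order tw d.
suff /subset_leq_card : [set x | O x && (sigma x == x)] \subset [set d; iter L./2 tw d].
  by move/leq_trans; apply; rewrite cards2 ltnS leq_b1.
apply/subsetP => x; rewrite !inE => /andP[Ox /eqP xfix].
have jL := findex_max Ox; have xj := iter_findex Ox; set j := findex tw d x in jL xj.
(* sigma conjugates tw to its inverse, so a fixed point tw^j d is also tw^-j d. *)
have x_rev : x = iter (L - j) tw d.
  by rewrite -{1}xfix -xj sigma_iter_twist dfix (iter_finv (twist_inj mK) (ltnW jL)).
case: (posnP j) => [j0 | j_gt0]; first by rewrite -xj j0 eqxx.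
have : findex tw d x = L - j.
  by rewrite {1}x_rev findex_iter // ltn_subrL j_gt0 (leq_ltn_trans _ jL).
rewrite -/j => jE; rewrite -xj (_ : L./2 = j) ?eqxx ?orbT //; lia.
Qed.

Lemma flip_in x : O x -> m' x = sigma (m (sigma x)).
Proof. by move=> Ox; rewrite ffunE Ox. Qed.

Lemma flip_out x : ~~ O x -> m' x = m x.
Proof. by move=> /negbTE Ox; rewrite ffunE Ox. Qed.

Lemma flip_involutive : involutive m'.
Proof.
move=> x; case Ox: (O x).
  have Ox' : O (sigma (m (sigma x))) by apply/orbit_sigma/orbit_m/orbit_sigma.
  by rewrite (flip_in Ox) (flip_in Ox') sigmaK mK sigmaK.
have Omx : ~~ O (m x) by apply: contraFN Ox => Omx; rewrite -[x]mK orbit_m.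
by rewrite (flip_out (negbT Ox)) (flip_out Omx) mK.
Qed.

Lemma fconnect_twist_flip y : fconnect (twist m') y =1 fconnect tw y.
Proof.
(* On the orbit of d, twist m' is the inverse of twist m. *)
have fconnect_twist_flip_d : fconnect (twist m') d =1 O.
  move=> x; rewrite -(same_fconnect_finv (twist_inj mK)); symmetry.
  apply: eq_fconnect_on => z; rewrite same_fconnect_finv; last exact: twist_inj.
  by move=> Oz; rewrite finv_twist /twist flip_in // sigmaK.
case Oy: (O y).
  have Oy' : fconnect (twist m') d y by rewrite fconnect_twist_flip_d.
  move=> x; rewrite -(same_twist_orbit mK Oy).
  by rewrite -(same_twist_orbit flip_involutive Oy') fconnect_twist_flip_d.
move=> x; symmetry; apply: eq_fconnect_on => z yz.
by rewrite /twist flip_out // (orbit_out (negbT Oy) yz).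
Qed.

Lemma flipK : flip m' d = m.
Proof.
apply/ffunP => x; rewrite ffunE fconnect_twist_flip.
case Ox: (O x); last by rewrite flip_out ?Ox.
by rewrite flip_in ?orbit_sigma // !sigmaK.
Qed.

Lemma partner_precedes_flip :
  m d != sigma (m d) -> partner_precedes m' d = ~~ partner_precedes m d.
Proof.
move=> md_nfix; rewrite /partner_precedes flip_in ?connect0 // dfix sigmaK ltnNge leq_eqVlt.
by rewrite (inj_eq val_inj) (inj_eq enum_rank_inj) (negbTE md_nfix).
Qed.

Lemma partner_precedes_flip_out j :
  ~~ O j -> partner_precedes m' j = partner_precedes m j.
Proof. by move=> Oj; rewrite /partner_precedes flip_out. Qed.

Lemma orbit_rep_flip y : orbit_rep m' y = orbit_rep m y.
Proof. by congr (_ && _); apply: eq_forallb => x; rewrite fconnect_twist_flip. Qed.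

Section Flippable.
Variable adj : rel V.
Hypothesis pm : pm_involution adj m.
Hypothesis flippable_d : flippable adj m d.

Lemma flip_pm_involution : pm_involution adj m'.
Proof.
apply/forallP => x; rewrite flip_involutive eqxx /=.
case Ox: (O x); last by rewrite flip_out ?Ox // pm_involution_adj.
rewrite flip_in //; have := implyP (forallP flippable_d (sigma x)) (orbit_sigma Ox).
by rewrite sigmaK.
Qed.

Lemma flippable_flip y : flippable adj m' y = flippable adj m y.
Proof.
case Oy: (O y).
  rewrite [RHS](_ : _ = flippable adj m d); last first.
    by apply: eq_forallb => z; rewrite (same_twist_orbit mK Oy).
  rewrite flippable_d; apply/forallP => z; apply/implyP; rewrite fconnect_twist_flip.
  move=> yz; have Oz : O z by rewrite (same_twist_orbit mK Oy).
  by rewrite flip_in // sigmaK pm_involution_adj.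
apply: eq_forallb => z; rewrite fconnect_twist_flip; case yz: (fconnect tw y z) => //=.
by rewrite flip_out // (orbit_out (negbT Oy) yz).
Qed.

End Flippable.
End Orbit.

Lemma card_fixed_le_reps : #|[set x | sigma x == x]| <= (#|[set d | orbit_rep m d]|).*2.
Proof.
rewrite -sum1_card (partition_big_imset (rep_of m)) -mul2n.
apply: (@leq_trans (\sum_(d in rep_of m @: [set x | sigma x == x]) 2)).
  apply: leq_sum => _ /imsetP[x0 + ->]; rewrite inE => /eqP x0fix.
  have /andP[/andP[/eqP dfix _] _] := rep_ofP x0fix.
  rewrite sum1dep_card; apply: leq_trans (card_fixed_in_orbit dfix).
  apply/subset_leq_card/subsetP => x; rewrite !inE => /andP[xfix /eqP <-].
  rewrite xfix andbT fconnect_sym; last exact: twist_inj.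
  by case/andP: (rep_ofP (eqP xfix)).
rewrite sum_nat_const mulnC leq_mul2l /=; apply/subset_leq_card/subsetP.
by move=> _ /imsetP[x + ->]; rewrite !inE => /eqP/rep_ofP/andP[].
Qed.

End Involution.
End Twist.

Lemma leq_double_self n : n <= n.*2.
Proof. by rewrite -addnn leq_addr. Qed.

Section Grid.
Variables (r : nat) (S : {set 'I_r}).
Local Notation V := (gridV r).

Definition transpose (p : V) : V := (p.2, p.1).

Definition step_free_adj : rel V :=
  fun u v => [&& grid_adj u v, ~~ is_step S u v & ~~ is_step S v u].

Lemma grid_minus_stepsE : grid_minus_steps S = edges_of step_free_adj.
Proof. by []. Qed.

Lemma transposeK : involutive transpose.
Proof. by case. Qed.

Lemma grid_adj_transpose u v : grid_adj (transpose u) (transpose v) = grid_adj u v.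
Proof. by rewrite /grid_adj orbC. Qed.

Lemma step_free_adj_sym : symmetric step_free_adj.
Proof.
have grid_adj_sym : symmetric (@grid_adj r).
  by move=> u v; rewrite /grid_adj -!val_eqE; lia.
by move=> u v; rewrite /step_free_adj grid_adj_sym [~~ _ && _]andbC.
Qed.

Lemma step_free_adj_irr : irreflexive step_free_adj.
Proof. by move=> u; apply/negbTE; rewrite /step_free_adj /grid_adj; lia. Qed.

Lemma transpose_fixedE (x : V) : (transpose x == x) = (x.1 == x.2).
Proof. by case: x => a b; rewrite /transpose xpair_eqE eq_sym andbb. Qed.

Lemma card_diagonal : #|[set x : V | transpose x == x]| = r.*2.
Proof.
have -> : [set x : V | transpose x == x] = [set (i, i) | i : 'I_(r.*2)].
  apply/setP => -[a b]; rewrite !inE transpose_fixedE /=.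
  by apply/eqP/imsetP => [-> | [i _ [-> ->]]]; first by exists b.
by rewrite card_imset ?card_ord // => i j [].
Qed.

Lemma neighbour_of_diagonal d v : transpose d = d -> grid_adj d v -> transpose v != v.
Proof. by move/eqP; rewrite !transpose_fixedE /grid_adj -!val_eqE /=; lia. Qed.

Definition diag (i : 'I_r) : V :=
  (widen_ord (leq_double_self r) i, widen_ord (leq_double_self r) i).

Lemma is_step_diag u v : is_step S u v -> exists2 i, i \in S & u = diag i.
Proof.
case/existsP=> i /andP[iS /and4P[/eqP u1 /eqP u2 _ _]]; exists i => //.
by case: u u1 u2 => a b /= a_i b_i; apply/eqP; rewrite xpair_eqE -!val_eqE /= a_i b_i eqxx.
Qed.

Definition flip_points (m : {ffun V -> V}) : seq V :=
  enum [set d | orbit_rep transpose m d && flippable transpose step_free_adj m d].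

Lemma mem_flip_points m d :
  (d \in flip_points m) = orbit_rep transpose m d && flippable transpose step_free_adj m d.
Proof. by rewrite mem_enum inE. Qed.

Section Matching.
Variable m : {ffun V -> V}.
Hypothesis pm : pm_involution step_free_adj m.
Let mK := pm_involutionK pm.
Local Notation rep := (orbit_rep transpose m).
Local Notation flippable_at := (flippable transpose step_free_adj m).

Lemma unflippable_diag d : transpose d = d -> ~~ flippable_at d ->
  exists2 i, i \in S & fconnect (twist transpose m) d (diag i).
Proof.
move=> dfix /forallPn[y]; rewrite negb_imply => /andP[Oy].
have /and3P[yadj _ _] := pm_involution_adj y pm.
rewrite /step_free_adj grid_adj_transpose yadj /= negb_and !negbK.
case/orP=> /is_step_diag[i iS e]; exists i; rewrite // -e.
  exact (orbit_sigma transposeK mK dfix Oy).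
exact (orbit_sigma transposeK mK dfix (orbit_m transposeK mK dfix Oy)).
Qed.

Lemma card_unflippable_reps : #|[set d | rep d && ~~ flippable_at d]| <= #|S|.
Proof.
apply: leq_trans (leq_imset_card (fun i => rep_of transpose m (diag i)) S).
apply/subset_leq_card/subsetP => d; rewrite inE => /andP[drep dnf].
have [i iS Odi] := unflippable_diag (eqP (andP drep).1) dnf.
have /andP[irep i_rep] := @rep_ofP _ transpose m (diag i) erefl.
apply/imsetP; exists i => //.
exact (orbit_rep_unique transposeK mK drep irep (connect_trans Odi i_rep)).
Qed.

Lemma size_flip_points : r - #|S| <= size (flip_points m).
Proof.
rewrite -cardE.
have := card_fixed_le_reps transposeK mK; rewrite card_diagonal leq_double.
rewrite -(cardsID [set d | flippable_at d]).
have -> : [set d | rep d] :&: [set d | flippable_at d] = [set d | rep d && flippable_at d].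
  by apply/setP => d; rewrite !inE.
have -> : [set d | rep d] :\: [set d | flippable_at d] = [set d | rep d && ~~ flippable_at d].
  by apply/setP => d; rewrite !inE andbC.
by have := card_unflippable_reps; lia.
Qed.

End Matching.
End Grid.

Arguments transpose {r}.

Theorem proposition3p7 (r k : nat) (S : {set 'I_r}) :
  1 <= r -> #|S| = k ->
  2 ^ (r - k) %| num_pm (grid_minus_steps S).
Proof.
move=> _ <-; have sigmaK := @transposeK r.
rewrite grid_minus_stepsE (num_pm_edges_of (step_free_adj_sym S) (step_free_adj_irr S)).
apply: (@pow2_dvd_card_flips _ _ _ (flip_points S) (fun d m => flip transpose m d)
                              (fun d m => partner_precedes transpose m d)).
- move=> m d; rewrite inE mem_flip_points => pm /andP[drep dfl].
  have mK := pm_involutionK pm; have /andP[/eqP dfix _] := drep.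
  split.
  + by rewrite inE (flip_pm_involution sigmaK mK dfix).
  + apply: eq_enum => y.
    by rewrite !inE (orbit_rep_flip sigmaK mK dfix) (flippable_flip sigmaK mK dfix).
  + exact (flipK sigmaK mK dfix).
  + apply: (partner_precedes_flip sigmaK dfix); rewrite eq_sym.
    by apply: neighbour_of_diagonal dfix _; case/and3P: (pm_involution_adj d pm).
- move=> m i j; rewrite inE !mem_flip_points => pm /andP[irep _] /andP[jrep _] ji.
  have /andP[/eqP ifix _] := irep.
  rewrite partner_precedes_flip_out //; apply: contra ji => ij.
  by rewrite (orbit_rep_unique sigmaK (pm_involutionK pm) irep jrep ij).
- by move=> m; rewrite inE => pm; rewrite enum_uniq; split=> //; apply: size_flip_points.
Qed.
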